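(* Let $G=\langle a\rangle\times\langle b\rangle\cong\mathbb{Z}\times\mathbb{Z}$ and let $\mathcal{A}$ be a Schur ring over $G$. If $\langle a^k\rangle$ is an $\mathcal{A}$-subgroup for some nonzero integer $k$, then $\langle a\rangle$ is an $\mathcal{A}$-subgroup.
   Context: $\mathbb{F}$ is a field of characteristic $0$. A Schur ring over a group $G$ is a subspace $\mathcal{A}\subseteq\mathbb{F}[G]$ spanned by the elements $\underline{D}=\sum_{g\in D}g$, $D\in\mathcal{D}$, where $\mathcal{D}$ is a partition of $G$ into finite subsets such that $\{1\}\in\mathcal{D}$, $D\in\mathcal{D}\Rightarrow D^{-1}\in\mathcal{D}$, and each product $\underline{D_1}\,\underline{D_2}$ is a finite $\mathbb{F}$-linear combination of the $\underline{D}$, $D\in\mathcal{D}$. The elements of $\mathcal{D}$ are basic sets; an $\mathcal{A}$-subgroup is a subgroup which is a union of basic sets. *)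

From HB Require Import structures.
From mathcomp Require Import all_boot all_order all_algebra.
Set Implicit Arguments. Unset Strict Implicit. Unset Printing Implicit Defensive.
Import Order.TTheory GRing.Theory Num.Theory.
Local Open Scope ring_scope.

(* The group G = <a> x <b> = Z x Z, written additively as int * int,
   with a = (1,0) and b = (0,1).  Subsets of G are boolean predicates. *)
Definition G : zmodType := (int * int)%type.
Definition gen_a : G := (1%:Z, 0%:Z).
Definition gen_b : G := (0%:Z, 1%:Z).

Definition cyc (x : G) : G -> Prop := fun g => exists n : int, g = x *~ n.

Definition gfinite (D : pred G) : Prop := exists s : seq G, uniq s /\ D =i s.

Definition is_partition (P : pred G -> Prop) : Prop :=
  [/\ (forall D, P D -> exists x, D x),
      (forall x, exists D, P D /\ D x) &
      (forall D1 D2 x, P D1 -> P D2 -> D1 x -> D2 x -> D1 =1 D2)].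

(* coefficient at g of the product underline(D1) * underline(D2) in F[G],
   where D1, D2 are enumerated without repetition by s1, s2 *)
Definition prod_coef (F : fieldType) (s1 s2 : seq G) (g : G) : F :=
  (\sum_(x <- s1) \sum_(y <- s2) ((x + y == g) : nat)%:R).

Definition schur_ring (F : fieldType) (P : pred G -> Prop) : Prop :=
  [/\ is_partition P,
      (forall D, P D -> gfinite D),
      (exists D, P D /\ D =1 pred1 0),
      (forall D, P D -> exists D', P D' /\ forall x, D' x = D (- x)) &
      (forall D1 D2 (s1 s2 : seq G), P D1 -> P D2 ->
         uniq s1 -> uniq s2 -> D1 =i s1 -> D2 =i s2 ->
         exists (n : nat) (c : 'I_n -> F) (E : 'I_n -> pred G),
           (forall i, P (E i)) /\
           forall g, prod_coef F s1 s2 g = \sum_(i < n) c i * ((E i g : bool) : nat)%:R)].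

Definition is_subgroup (H : G -> Prop) : Prop :=
  H 0 /\ (forall x y, H x -> H y -> H (x - y)).

Definition A_subgroup (P : pred G -> Prop) (H : G -> Prop) : Prop :=
  is_subgroup H /\
  forall x, H x -> exists D, P D /\ D x /\ (forall y, D y -> H y).

From HB Require Import structures.
From mathcomp Require Import all_boot all_algebra.
From mathcomp Require Import cyclic ring.
Import GRing.Theory Num.Theory.
Set Implicit Arguments.
Unset Strict Implicit.
Unset Printing Implicit Defensive.

Local Open Scope ring_scope.

(* Let a basic set [T] meet [<a>] in [x0].  Pick a prime [p] not dividing [k]
   and [m = p ^ r] with [m = 1 (mod k)], so that [x0 - m x0] lies in [<a^k>].
   As [<a^k>] is an A-subgroup, comparing coefficients of [T D] for basic
   [D \subset <a^k>] puts every [t \in T] in the [<a^k>]-coset of an element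
   of the basic set [E] containing [m x0].  By the Frobenius congruence
   [T^p = T^(p) (mod p)] and characteristic 0, every element of [E] is [m u]
   for some [u \in T].  Hence the [b]-coordinate of each [t \in T] is [m]
   times that of another element of [T], which forces it to vanish. *)

(* [tuple_count s j g] is the number of [j]-tuples over [s] summing to [g],
   i.e. the coefficient of [g] in [(underline s)^j]. *)
Fixpoint tuple_count (s : seq G) (j : nat) (g : G) : nat :=
  if j is j'.+1 then (\sum_(y <- s) tuple_count s j' (g - y))%N
  else (g == 0 : nat).

Lemma tuple_count_cons y s j g :
  tuple_count (y :: s) j g =
  (\sum_(i < j.+1) 'C(j, i) * tuple_count s (j - i) (g - y *+ i))%N.
Proof.
elim: j g => [|j IH] g; first by rewrite big_ord1 /= subr0 bin0 mul1n.
rewrite /= big_cons IH.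
under eq_bigr => z _ do rewrite IH.
rewrite exchange_big /=.
under [X in (_ + X)%N]eq_bigr => i _ do rewrite -big_distrr /=.
rewrite [RHS]big_ord_recl bin0 mul1n subn0 mulr0n subr0.
under [X in (_ = (_ + X)%N)]eq_bigr => i _ do rewrite lift0 binS mulnDl subSS.
rewrite big_split /= [RHS]addnA [RHS]addnC; congr (_ + _)%N.
  by apply: eq_bigr => i _; rewrite mulrS opprD addrA.
rewrite [LHS]big_ord_recl bin0 mul1n subn0.
rewrite [X in (_ = (_ + X))%N]big_ord_recr /= bin_small // mul0n addn0.
congr (_ + _)%N; first by apply: eq_bigr => z _; rewrite mulr0n subr0.
apply: eq_bigr => i _; rewrite -[(j - i)%N](subnSK (ltn_ord i)) /=.
congr (_ * _)%N; apply: eq_bigr => z _; congr tuple_count.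
by rewrite -!addrA (addrC (- z)).
Qed.

(* Frobenius: modulo [p], only the constant [p]-tuples survive. *)
Lemma tuple_count_prime_mod p s g : prime p ->
  (tuple_count s p g = count (fun t => g == t *+ p) s %[mod p])%N.
Proof.
case: p => // p pp; elim: s => [|y s IH]; first by rewrite /= big_nil.
rewrite tuple_count_cons /= big_ord_recl big_ord_recr /= bin0 mul1n mulr0n.
rewrite subr0 binn mul1n subnn /= subr_eq0.
set S := (\sum_(i < p) _)%N.
have pS : (p.+1 %| S)%N.
  apply: dvdn_sum => i _; apply/dvdn_mulr/prime_dvd_bin => //.
  by rewrite /= ltnS ltn_ord.
rewrite addnCA -modnDml (eqP pS) add0n addnC -modnDmr.
by rewrite -/(tuple_count s p.+1 g) IH modnDmr.
Qed.

Lemma mulrn_pair (t : G) n : t *+ n = (t.1 *+ n, t.2 *+ n).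
Proof. by elim: n => [|n IH]; rewrite ?mulr0n // !mulrS IH. Qed.

Lemma mulrz_pair (t : G) (z : int) : t *~ z = (t.1 *~ z, t.2 *~ z).
Proof. by case: z => n; rewrite /intmul mulrn_pair. Qed.

Lemma mulrnG_inj n : (0 < n)%N -> injective (fun t : G => t *+ n).
Proof.
move=> n_gt0 [a b] [c d] /=; rewrite !mulrn_pair /= => -[/eqP ac /eqP bd].
by move: ac bd; rewrite !(eqr_pMn2r n_gt0) => /eqP -> /eqP ->.
Qed.

Lemma pchar0_natr_inj (F : fieldType) : [pchar F] =i pred0 ->
  injective (fun n : nat => n%:R : F).
Proof.
move=> /pcharf0P F0 m n /= mn; wlog le_mn : m n mn / (m <= n)%N.
  by move=> wlog; case: (leqP m n) => [|/ltnW] le; [|apply/esym]; apply: wlog.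
move: mn; rewrite -(subnKC le_mn) natrD -{1}(addr0 m%:R) => /addrI/esym/eqP.
by rewrite F0 => /eqP ->; rewrite addn0.
Qed.

Lemma prod_coefE (F : fieldType) (s1 s2 : seq G) (D1 : pred G) g :
  uniq s1 -> D1 =i s1 ->
  prod_coef F s1 s2 g = \sum_(y <- s2) (D1 (g - y) : nat)%:R.
Proof.
move=> u1 e1; rewrite /prod_coef exchange_big /=; apply: eq_bigr => y _.
rewrite -natr_sum -[D1 _]/(_ \in D1) e1 -count_uniq_mem // -sum1_count.
congr _%:R; rewrite [RHS]big_mkcond; apply: eq_bigr => x _.
by rewrite (can2_eq (addrK y) (subrK y)) /=; case: eqP.
Qed.

Section BasicSpan.
Variables (F : fieldType) (P : pred G -> Prop).

Fixpoint all_basic (l : seq (F * pred G)) : Prop :=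
  if l is z :: l' then P z.2 /\ all_basic l' else True.

(* [f] is the coefficient function of an element of the Schur ring. *)
Definition basic_span (f : G -> F) : Prop :=
  exists2 l : seq (F * pred G), all_basic l &
    forall g, f g = \sum_(z <- l) z.1 * (z.2 g : nat)%:R.

Lemma all_basic_cat l1 l2 :
  all_basic l1 -> all_basic l2 -> all_basic (l1 ++ l2).
Proof. by elim: l1 => //= z l1 IH [? ?] ?; split=> //; apply: IH. Qed.

Lemma all_basic_family n (c : 'I_n -> F) (E : 'I_n -> pred G) :
  (forall i, P (E i)) -> all_basic [seq (c i, E i) | i <- enum 'I_n].
Proof. by move=> PE; elim: (enum 'I_n) => //= i r IH; split. Qed.

Lemma eq_basic_span f f' : f =1 f' -> basic_span f -> basic_span f'.
Proof. by move=> ff' [l Pl Hf]; exists l => // g; rewrite -ff'. Qed.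

Lemma basic_span_const f D x y : is_partition P -> basic_span f ->
  P D -> D x -> D y -> f x = f y.
Proof.
case=> _ _ Pdisj [l Pl Hf] PD Dx Dy; rewrite !Hf {Hf}.
elim: l Pl => [|z l IH]; first by rewrite !big_nil.
case=> Pz Pl; rewrite !big_cons IH //; congr (_ * _ + _).
have Dz u : z.2 u -> D u -> z.2 =1 D by apply: Pdisj.
case zx: (z.2 x); case zy: (z.2 y) => //.
  by have := Dz _ zx Dx y; rewrite zy Dy.
by have := Dz _ zy Dy x; rewrite zx Dx.
Qed.

Lemma basic_span_conv f T s : schur_ring F P -> basic_span f ->
  P T -> uniq s -> T =i s -> basic_span (fun g => \sum_(y <- s) f (g - y)).
Proof.
case=> _ Pfin _ _ Pmul [l Pl Hf] PT us Ts.
apply: (@eq_basic_span (fun g =>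
  \sum_(y <- s) \sum_(z <- l) z.1 * (z.2 (g - y) : nat)%:R)).
  by move=> g; apply: eq_bigr => y _; rewrite Hf.
elim: l Pl {Hf} => [|z l IH] [].
  by exists [::] => // g; rewrite big_nil big1 // => y _; rewrite big_nil.
move=> Pz /IH[l' Pl' Hl']; have [sz [usz Dsz]] := Pfin _ Pz.
have [n [c [E [PE HE]]]] := Pmul _ _ _ _ Pz PT usz us Dsz Ts.
exists ([seq (z.1 * c i, E i) | i <- enum 'I_n] ++ l').
  exact/all_basic_cat/Pl'/all_basic_family.
move=> g; rewrite big_cat /= -Hl' big_map big_enum /=.
under eq_bigr => y _ do rewrite big_cons.
rewrite big_split /= -mulr_sumr -(prod_coefE _ _ _ usz Dsz) HE mulr_sumr.
by congr (_ + _); apply: eq_bigr => i _; rewrite mulrA.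
Qed.

End BasicSpan.

Section SchurRingChar0.
Variables (F : fieldType) (P : pred G -> Prop).
Hypotheses (F0 : [pchar F] =i pred0) (SR : schur_ring F P).

Let P_partition : is_partition P. Proof. by case: SR. Qed.

Let P_finite D : P D -> exists s, uniq s /\ D =i s.
Proof. by case: SR => _ Pfin _ _ _; apply: Pfin. Qed.

Lemma basic_span_indicator D :
  P D -> basic_span P (fun g => (D g : nat)%:R : F).
Proof. by move=> PD; exists [:: (1, D)] => // g; rewrite big_seq1 mul1r. Qed.

Lemma basic_span_tuple_count T s j : P T -> uniq s -> T =i s ->
  basic_span P (fun g => (tuple_count s j g)%:R : F).
Proof.
move=> PT us Ts; elim: j => [|j IH] /=.
  case: SR => _ _ [D0 [PD0 D0E]] _ _.
  by apply: eq_basic_span (basic_span_indicator PD0) => g; rewrite D0E.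
apply: eq_basic_span (basic_span_conv SR IH PT us Ts) => g.
by rewrite natr_sum.
Qed.

(* The number of [p]-tuples over [T] summing to [g] is constant on [E];
   reducing modulo [p] shows that every element of [E] is a [p]-multiple. *)
Lemma basic_mulrn_prime T E p t0 e : prime p -> P T -> P E ->
  T t0 -> E (t0 *+ p) -> E e -> exists2 t, T t & e = t *+ p.
Proof.
move=> pp PT PE Tt0 Et0 Ee; have [s [us Ts]] := P_finite PT.
have := basic_span_const P_partition
  (basic_span_tuple_count p PT us Ts) PE Ee Et0.
move=> /pchar0_natr_inj-/(_ F0) count_e.
have count_t0 : count (fun t => t0 *+ p == t *+ p) s = 1%N.
  rewrite (eq_count (a2 := pred1 t0)); last first.
    by move=> t /=; rewrite (inj_eq (mulrnG_inj (prime_gt0 pp))) eq_sym.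
  by rewrite count_uniq_mem // -Ts [_ \in T]Tt0.
have := tuple_count_prime_mod s (t0 *+ p) pp.
rewrite count_t0 -count_e tuple_count_prime_mod // => count_mod.
have /hasP[t st /eqP ->] : has (fun t => e == t *+ p) s.
  rewrite has_count lt0n; apply/eqP => count0; move: count_mod.
  by rewrite count0 mod0n modn_small ?prime_gt1.
by exists t; rewrite // -[T t]/(t \in T) Ts.
Qed.

Lemma basic_mulrn_prime_pow T E p i t0 e : prime p -> P T -> P E ->
  T t0 -> E (t0 *+ p ^ i) -> E e -> exists2 t, T t & e = t *+ p ^ i.
Proof.
case: P_partition => _ Pcover Pdisj pp PT.
elim: i E e => [|i IH] E e PE Tt0.
  rewrite expn0 mulr1n => Et0 Ee; exists e; last by rewrite mulr1n.
  by rewrite -(Pdisj _ _ _ PE PT Et0 Tt0).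
rewrite expnSr mulrnA => Et0 Ee; have [D [PD Dt0]] := Pcover (t0 *+ p ^ i).
have [d Dd ->] := basic_mulrn_prime pp PD PE Dt0 Et0 Ee.
have [t Tt ->] := IH D d PD Tt0 Dt0 Dd.
by exists t; rewrite // mulrnA.
Qed.

(* The number of [y \in T2] with [t - y] in the basic set [D \subset H]
   is constant on [T1]. *)
Lemma A_subgroup_basic_coset (H : G -> Prop) T1 T2 t1 t2 t1' :
  A_subgroup P H -> P T1 -> P T2 -> T1 t1 -> T2 t2 -> H (t1 - t2) ->
  T1 t1' -> exists2 t2', T2 t2' & H (t1' - t2').
Proof.
case=> _ Hbasic PT1 PT2 T1t1 T2t2 Ht T1t1'.
have [D [PD [Dt DH]]] := Hbasic _ Ht; have [s [us Ts]] := P_finite PT2.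
have := basic_span_const P_partition
  (basic_span_conv SR (basic_span_indicator PD) PT2 us Ts) PT1 T1t1 T1t1'.
rewrite /= -!natr_sum => /pchar0_natr_inj-/(_ F0) sum_eq.
have count_eq : count (fun y => D (t1 - y)) s = count (fun y => D (t1' - y)) s.
  by rewrite -!sum1_count [LHS]big_mkcond [RHS]big_mkcond.
have /hasP[y sy Dy] : has (fun y => D (t1' - y)) s.
  rewrite has_count -count_eq -has_count.
  by apply/hasP; exists t2; rewrite -?Ts.
by exists y; [rewrite -[T2 y]/(y \in T2) Ts | apply: DH].
Qed.

End SchurRingChar0.

Lemma cyc_subgroup x : is_subgroup (cyc x).
Proof.
split; first by exists 0; rewrite mulr0z.
by move=> _ _ [i ->] [j ->]; exists (i - j); rewrite mulrzBr.
Qed.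

Lemma cyc_gen_aP x : cyc gen_a x <-> x.2 = 0.
Proof.
split=> [[i ->]|x2]; first by rewrite mulrz_pair /= mul0rz.
by exists x.1; rewrite mulrz_pair /= mul0rz intz -x2; case: x {x2}.
Qed.

Lemma cyc_gen_a_mulz_snd k x : cyc (gen_a *~ k) x -> x.2 = 0.
Proof. by case=> i ->; rewrite !mulrz_pair /= !mul0rz. Qed.

Lemma cyc_gen_a_subn_mulrn k x m : (k %| m%:Z - 1)%Z ->
  cyc gen_a x -> cyc (gen_a *~ k) (x - x *+ m).
Proof.
case/dvdzP=> q mq [n ->]; exists (- (n * q)).
rewrite -mulrz_nat -!mulrzA -mulrzBr; congr (_ *~ _).
by rewrite natz -[m%:Z](subrK 1) mq; ring.
Qed.

Lemma prime_pow_dvdz_subr1 (k : int) : k != 0 ->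
  exists p r, [/\ prime p, (1 < p ^ r)%N & (k %| (p ^ r)%:Z - 1)%Z].
Proof.
move=> k0; have [p kp pp] := prime_above `|k|.
have k_gt0 : (0 < `|k|)%N by rewrite absz_gt0.
have cop : coprime p `|k|.
  rewrite prime_coprime //; apply: contraTN kp => /(dvdn_leq k_gt0).
  by rewrite -leqNgt.
have r_gt0 : (0 < totient `|k|)%N by rewrite totient_gt0.
have m_gt1 : (1 < p ^ totient `|k|)%N.
  rewrite -(prednK r_gt0) expnS (leq_trans (prime_gt1 pp)) //.
  by rewrite leq_pmulr ?expn_gt0 ?prime_gt0.
exists p, (totient `|k|); split => //.
rewrite dvdzE -[(p ^ _)%N](subnK (ltnW m_gt1)) PoszD addrK absz_nat.
by rewrite -eqn_mod_dvd ?(ltnW m_gt1) //; apply/eqP/Euler_exp_totient.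
Qed.

Lemma int_descent_eq0 (S : int -> Prop) m : (1 < m)%N ->
  (forall z, S z -> exists2 z', S z' & z = z' *+ m) -> forall z, S z -> z = 0.
Proof.
move=> m_gt1 Sdesc z Sz; have [N] := ubnP `|z|%N.
elim: N z Sz => // N IH _ /Sdesc[z Sz ->] zN.
have [->|z0] := eqVneq z 0; first by rewrite mul0rn.
rewrite (IH z) ?mul0rn // -ltnS (leq_trans _ zN) // ltnS.
by rewrite -mulr_natr abszM natz absz_nat ltn_Pmulr // absz_gt0.
Qed.

Lemma basic_set_sub_cyc_gen_a (F : fieldType) (P : pred G -> Prop) k T x0 t :
  [pchar F] =i pred0 -> schur_ring F P -> k != 0 ->
  A_subgroup P (cyc (gen_a *~ k)) ->
  P T -> T x0 -> cyc gen_a x0 -> T t -> t.2 = 0.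
Proof.
move=> F0 SR k0 Hk PT Tx0 ax0 Tt.
have [p [r [pp pr_gt1 k_dvd]]] := prime_pow_dvdz_subr1 k0.
have [_ Pcover _] : is_partition P by case: SR.
have [E [PE Em]] := Pcover (x0 *+ p ^ r).
have Hx0 := cyc_gen_a_subn_mulrn k_dvd ax0.
apply: (@int_descent_eq0 (fun z => exists2 u, T u & u.2 = z) _ pr_gt1);
  last by exists t.
move=> _ [u Tu <-].
have [e Ee Hue] := A_subgroup_basic_coset F0 SR Hk PT PE Tx0 Em Hx0 Tu.
have [u' Tu' eu'] := basic_mulrn_prime_pow F0 SR pp PT PE Tx0 Em Ee.
exists u'.2; first by exists u'.
apply/eqP; rewrite -subr_eq0 -(cyc_gen_a_mulz_snd Hue) eu' mulrn_pair.
by case: u {Tu Hue}.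
Qed.

Theorem mainTheorem2 (F : fieldType) (P : pred G -> Prop) (k : int) :
  [pchar F] =i pred0 ->
  schur_ring F P ->
  k != 0 ->
  A_subgroup P (cyc (gen_a *~ k)) ->
  A_subgroup P (cyc gen_a).
Proof.
move=> F0 SR k0 Hk; split=> [|x ax]; first exact: cyc_subgroup.
have [_ Pcover _] : is_partition P by case: SR.
have [D [PD Dx]] := Pcover x; exists D; split=> //; split=> // y Dy.
exact/cyc_gen_aP/(basic_set_sub_cyc_gen_a F0 SR k0 Hk PD Dx ax Dy).
Qed.
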